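(* Let $(V_1, V_2)$ be an isometric pair on $\mathcal{H}$ and let $\mathcal{W} = \ker (V_1V_2)^*$, $\mathcal{W}_i = \ker V_i^*$ ($i=1,2$). Suppose $(\ker C(V_1, V_2))^\perp = \mathcal{W}$. Then $\dim \mathcal{W}_1 = \dim \mathcal{W}_2$. In particular, if $\mathcal{W}$ is finite-dimensional, then $\dim \mathcal{W}$ is even.
   Context: All Hilbert spaces are complex and separable. An isometric pair is a pair $(V_1,V_2)$ of commuting isometries. $C(V_1,V_2) := I - V_1V_1^* - V_2V_2^* + V_1V_2V_1^*V_2^*$. *)

From mathcomp Require Import all_boot all_algebra.
From mathcomp Require Import all_classical reals complex.
Set Implicit Arguments. Unset Strict Implicit. Unset Printing Implicit Defensive.
Import GRing.Theory Num.Theory.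
Local Open Scope ring_scope.
Local Open Scope classical_set_scope.

Section Hilbert.
Variable R : realType.
Local Notation C := R[i].
Variable H : lmodType C.
Variable ip : H -> H -> C.

Definition is_inner_product : Prop :=
  [/\ (forall x y z, ip (x + y) z = ip x z + ip y z),
      (forall (a : C) x y, ip (a *: x) y = a * ip x y),
      (forall x y, ip y x = (ip x y)^*),
      (forall x, 0 <= ip x x) &
      (forall x, ip x x = 0 -> x = 0)].

Definition ipnorm (x : H) : R := Num.sqrt (complex.Re (ip x x)).

Definition ip_complete : Prop :=
  forall u : nat -> H,
    (forall e : R, 0 < e -> exists N, forall m n, (N <= m)%N -> (N <= n)%N ->
        ipnorm (u m - u n) < e) ->
    exists l : H, forall e : R, 0 < e -> exists N, forall n, (N <= n)%N ->
        ipnorm (u n - l) < e.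

Definition ip_separable : Prop :=
  exists d : nat -> H, forall (x : H) (e : R), 0 < e -> exists n, ipnorm (x - d n) < e.

Definition is_hilbert_space : Prop :=
  [/\ is_inner_product, ip_complete & ip_separable].

Definition is_adjoint (T Ts : H -> H) : Prop :=
  forall x y, ip (T x) y = ip x (Ts y).

Definition is_linear_op (T : H -> H) : Prop :=
  (forall x y, T (x + y) = T x + T y) /\ (forall (a : C) x, T (a *: x) = a *: T x).

Definition is_isometry (T : H -> H) : Prop :=
  is_linear_op T /\ forall x y, ip (T x) (T y) = ip x y.

Definition isometric_pair (V1 V2 : H -> H) : Prop :=
  [/\ is_isometry V1, is_isometry V2 & forall x, V1 (V2 x) = V2 (V1 x)].

Definition kernel (T : H -> H) : set H := [set x | T x = 0].

Definition orth_compl (S : set H) : set H := [set y | forall x, S x -> ip x y = 0].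

Definition defect_op (V1 V2 V1s V2s : H -> H) : H -> H :=
  fun x => x - V1 (V1s x) - V2 (V2s x) + V1 (V2 (V1s (V2s x))).

Definition is_onb (I : Type) (W : set H) (b : I -> H) : Prop :=
  [/\ (forall i, W (b i)),
      (forall i j, ip (b i) (b j) = if `[< i = j >] then 1 else 0) &
      (forall x, W x -> (forall i, ip (b i) x = 0) -> x = 0)].

(* Hilbert dimensions agree: W1 and W2 admit orthonormal bases indexed by
   the same set (i.e. of equal cardinality). *)
Definition same_hdim (W1 W2 : set H) : Prop :=
  exists (I : Type) (b1 b2 : I -> H), is_onb W1 b1 /\ is_onb W2 b2.

End Hilbert.

From mathcomp Require Import all_boot all_algebra.
From mathcomp Require Import all_classical reals complex.
From mathcomp.algebra_tactics Require Import ring lra.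
Import GRing.Theory Num.Theory order.Order.TTheory.
Local Open Scope ring_scope.
Local Open Scope classical_set_scope.
Set Implicit Arguments. Unset Strict Implicit. Unset Printing Implicit Defensive.

(* For x in W1 = ker V1^* one computes C(V1,V2) x = (I - V2 V2^* ) x, and W1 is
   contained in W = (ker C)^perp; hence I - V2 V2^* maps W1 injectively into
   W2 = ker V2^*, and symmetrically I - V1 V1^* maps W2 injectively into W1.
   Linear injections in both directions between two subspaces of a separable
   space make their maximal orthonormal sets equinumerous: both are countable,
   and a finite orthonormal basis of one bounds the size of every orthonormal
   family of the other.  Finally W is the orthogonal sum of W1 and V1 W2, since
   x = (I - V1 V1^* ) x + V1 (V1^* x) with V1^* x in W2 when x is in W; so a basis
   of W is a basis of W1 followed by the image under V1 of a basis of W2, and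
   dim W = 2 dim W1. *)

Lemma infinite_set_seq T (S : set T) :
  infinite_set S -> exists u : nat -> T, injective u /\ forall n, S (u n).
Proof.
move/infiniteP/card_leP/injfunPex => [f _ f_inj].
exists (fun n => val (f (to_setT n))); split => [n n' /val_inj|n].
  by move/f_inj; rewrite !in_setT => /(_ isT isT) /(congr1 val).
exact: set_mem (valP (f (to_setT n))).
Qed.

Lemma card_eq_I_enum T (S : set T) k :
  (S #= `I_k)%card -> exists h : 'I_k -> set_type S, bijective h.
Proof.
move=> /card_eq_trans /(_ card_II) /card_bijP [f [g fK gK]].
exists (g \o to_setT); apply: bij_comp; first by exists f.
by exists val => // y; apply: val_inj.
Qed.

Lemma leq_free_span (F : fieldType) (V : lmodType F) m k (u : 'I_m -> V)
    (f : 'I_k -> V) (c : 'I_m -> 'I_k -> F) :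
  (forall a : 'I_m -> F, \sum_i a i *: u i = 0 -> forall i, a i = 0) ->
  (forall i, u i = \sum_j c i j *: f j) -> (m <= k)%N.
Proof.
move=> free_u u_span; rewrite leqNgt; apply/negP => ltkm.
pose M : 'M[F]_(m, k) := \matrix_(i, j) c i j.
have /rowV0Pn [v /sub_kermxP vM nz_v] : kermx M != 0.
  rewrite kermx_eq0 /row_free; apply: contraTN ltkm => /eqP <-.
  by rewrite -leqNgt rank_leq_col.
suff v0 : forall i, v 0 i = 0 by case/eqP: nz_v; apply/rowP => i; rewrite v0 mxE.
apply: free_u; transitivity (\sum_j (v *m M) 0 j *: f j); last first.
  by rewrite vM; apply: big1 => j _; rewrite mxE scale0r.
under eq_bigr do rewrite u_span scaler_sumr.
rewrite exchange_big; apply: eq_bigr => j _.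
rewrite !mxE scaler_suml; apply: eq_bigr => i _.
by rewrite scalerA mxE.
Qed.

Section LinearOperators.
Variables (R : realType) (H : lmodType R[i]).
Implicit Types (S T V Vs : H -> H) (W : set H).

Lemma lin0 T : is_linear_op T -> T 0 = 0.
Proof. by case=> _ TZ; have := TZ 0 0; rewrite !scale0r. Qed.

Lemma linD T : is_linear_op T -> forall x y, T (x + y) = T x + T y.
Proof. by case. Qed.

Lemma linZ T : is_linear_op T -> forall a x, T (a *: x) = a *: T x.
Proof. by case. Qed.

Lemma linB T : is_linear_op T -> forall x y, T (x - y) = T x - T y.
Proof. by move=> lT x y; rewrite linD // -scaleN1r linZ // scaleN1r. Qed.

Lemma lin_sum T : is_linear_op T -> forall (I : Type) (r : seq I) (F : I -> H),
  T (\sum_(i <- r) F i) = \sum_(i <- r) T (F i).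
Proof. by move=> lT I r F; apply: big_morph; [exact: linD | exact: lin0]. Qed.

Lemma lin_comp S T : is_linear_op S -> is_linear_op T -> is_linear_op (fun x => S (T x)).
Proof. by move=> lS lT; split=> [x y|a x]; rewrite !(linD, linZ). Qed.

Definition subspace W := W 0 /\ forall (a : R[i]) x y, W x -> W y -> W (a *: x + y).

Lemma kernel_subspace T : is_linear_op T -> subspace (kernel T).
Proof.
move=> lT; split=> [|a x y]; rewrite /kernel /= ?lin0 // => Tx Ty.
by rewrite linD // linZ // Tx Ty scaler0 addr0.
Qed.

Section Subspace.
Variable W : set H.
Hypothesis W_sub : subspace W.

Lemma subspace0 : W 0.
Proof. by case: W_sub. Qed.

Lemma subspaceZD a x y : W x -> W y -> W (a *: x + y).
Proof. by case: W_sub => _; apply. Qed.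

Lemma subspaceZ a x : W x -> W (a *: x).
Proof.
by move=> Wx; rewrite -[_ *: x]addr0; apply: subspaceZD => //; apply: subspace0.
Qed.

Lemma subspaceD x y : W x -> W y -> W (x + y).
Proof. by move=> Wx Wy; rewrite -[x]scale1r; apply: subspaceZD. Qed.

Lemma subspaceB x y : W x -> W y -> W (x - y).
Proof. by move=> Wx Wy; rewrite addrC -scaleN1r; apply: subspaceZD. Qed.

Lemma subspace_sum (I : Type) (r : seq I) (F : I -> H) :
  (forall i, W (F i)) -> W (\sum_(i <- r) F i).
Proof. by move=> WF; apply: big_ind => //; [exact: subspace0 | exact: subspaceD]. Qed.

End Subspace.

Lemma kernel_comp_sub S T : is_linear_op S -> kernel T `<=` kernel (fun x => S (T x)).
Proof. by move=> lS x; rewrite /kernel /= => ->; apply: lin0. Qed.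

Definition linear_embedding T (A B : set H) :=
  [/\ is_linear_op T, forall x, A x -> B (T x) & forall x, A x -> T x = 0 -> x = 0].

Lemma subset_embedding (A B : set H) : A `<=` B -> linear_embedding id A B.
Proof. by split. Qed.

Definition coker_proj V Vs x := x - V (Vs x).

Lemma coker_proj_linear V Vs :
  is_linear_op V -> is_linear_op Vs -> is_linear_op (coker_proj V Vs).
Proof.
move=> lV lVs; split=> [x y|a x]; rewrite /coker_proj.
  by rewrite linD // linD // opprD addrACA.
by rewrite linZ // linZ // scalerBr.
Qed.

Lemma coker_proj_ker V Vs x :
  is_linear_op Vs -> cancel V Vs -> kernel Vs (coker_proj V Vs x).
Proof. by move=> lVs VK; rewrite /kernel /= /coker_proj linB // VK subrr. Qed.

End LinearOperators.

Section InnerProduct.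
Variables (R : realType) (H : lmodType R[i]) (ip : H -> H -> R[i]).
Hypothesis hip : is_inner_product ip.
Implicit Types (x y z : H) (A B W S : set H) (T V Vs : H -> H).

Lemma ipDl x y z : ip (x + y) z = ip x z + ip y z.
Proof. by case: hip => h _ _ _ _; apply: h. Qed.

Lemma ipZl a x y : ip (a *: x) y = a * ip x y.
Proof. by case: hip => _ h _ _ _; apply: h. Qed.

Lemma ipC x y : ip y x = (ip x y)^*.
Proof. by case: hip => _ _ h _ _; apply: h. Qed.

Lemma ip_ge0 x : 0 <= ip x x.
Proof. by case: hip => _ _ _ h _; apply: h. Qed.

Lemma ip_eq0 x : ip x x = 0 -> x = 0.
Proof. by case: hip => _ _ _ _ h; apply: h. Qed.

Lemma ipDr x y z : ip x (y + z) = ip x y + ip x z.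
Proof. by rewrite ipC ipDl rmorphD [ip x y]ipC [ip x z]ipC. Qed.

Lemma ipZr a x y : ip x (a *: y) = a^* * ip x y.
Proof. by rewrite ipC ipZl rmorphM [ip x y]ipC. Qed.

Lemma ip0l y : ip 0 y = 0.
Proof. by rewrite -(scale0r 0) ipZl mul0r. Qed.

Lemma ip0r y : ip y 0 = 0.
Proof. by rewrite ipC ip0l conjC0. Qed.

Lemma ipBl x y z : ip (x - y) z = ip x z - ip y z.
Proof. by rewrite ipDl -scaleN1r ipZl mulN1r. Qed.

Lemma ipBr x y z : ip z (x - y) = ip z x - ip z y.
Proof. by rewrite ipC ipBl rmorphB [ip z x]ipC [ip z y]ipC. Qed.

Lemma ip_suml (I : Type) (r : seq I) (F : I -> H) y :
  ip (\sum_(i <- r) F i) y = \sum_(i <- r) ip (F i) y.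
Proof. by apply: (big_morph (ip^~ y)); [move=> a b; apply: ipDl | apply: ip0l]. Qed.

Lemma ip_sumr (I : Type) (r : seq I) (F : I -> H) y :
  ip y (\sum_(i <- r) F i) = \sum_(i <- r) ip y (F i).
Proof. by apply: (big_morph (ip y)); [move=> a b; apply: ipDr | apply: ip0r]. Qed.

Lemma ip_ext x y : (forall z, ip z x = ip z y) -> x = y.
Proof. by move=> h; apply/subr0_eq/ip_eq0; rewrite ipBr h subrr. Qed.

Lemma adjoint_linear T Ts : is_adjoint ip T Ts -> is_linear_op Ts.
Proof.
by move=> adj; split=> [x y|a x]; apply: ip_ext => z; rewrite -adj ?ipDr ?ipZr -!adj.
Qed.

Lemma isometry_adjointK V Vs : is_isometry ip V -> is_adjoint ip V Vs -> cancel V Vs.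
Proof. by case=> _ isoV adj x; apply: ip_ext => z; rewrite -adj isoV. Qed.

Lemma adjoint_commute V1 V2 V1s V2s :
    (forall x, V1 (V2 x) = V2 (V1 x)) -> is_adjoint ip V1 V1s -> is_adjoint ip V2 V2s ->
  forall x, V2s (V1s x) = V1s (V2s x).
Proof.
by move=> comm adj1 adj2 x; apply: ip_ext => z; rewrite -adj2 -!adj1 -adj2 comm.
Qed.

Lemma adjoint_ker_orth V Vs x :
  is_adjoint ip V Vs -> kernel Vs x -> forall y, ip x (V y) = 0.
Proof. by move=> adj Vsx y; rewrite ipC adj Vsx ip0r conjC0. Qed.

Lemma orth_compl_self S x : S x -> orth_compl ip S x -> x = 0.
Proof. by move=> Sx /(_ x Sx) /ip_eq0. Qed.

Definition orthonormal_family (I : Type) (u : I -> H) :=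
  (forall i, ip (u i) (u i) = 1) /\ (forall i j, i <> j -> ip (u i) (u j) = 0).

Definition orthonormal_set S :=
  (forall x, S x -> ip x x = 1) /\ (forall x y, S x -> S y -> x <> y -> ip x y = 0).

Definition onb_set W S :=
  [/\ S `<=` W, orthonormal_set S &
      forall x, W x -> (forall s, S s -> ip s x = 0) -> x = 0].

Lemma is_onbP W (I : Type) (b : I -> H) :
  is_onb ip W b <->
  [/\ forall i, W (b i), orthonormal_family b &
      forall x, W x -> (forall i, ip (b i) x = 0) -> x = 0].
Proof.
split=> -[bW bo bmax]; split=> //.
  by split=> [i|i j ij]; rewrite bo; [rewrite asboolT | rewrite asboolF].
move=> i j; have [<-|ij] := pselect (i = j).
  by rewrite asboolT //; apply: bo.1.
by rewrite asboolF //; apply: bo.2.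
Qed.

Lemma orthonormal_set_family S (I : Type) (u : I -> H) :
  orthonormal_set S -> injective u -> (forall i, S (u i)) -> orthonormal_family u.
Proof.
by move=> [S1 S0] u_inj Su; split=> [i|i j ij]; [apply: S1 | apply: S0 => // /u_inj].
Qed.

Lemma orthonormal_free (I : finType) (u : I -> H) : orthonormal_family u ->
  forall a : I -> R[i], \sum_i a i *: u i = 0 -> forall i, a i = 0.
Proof.
move=> [u1 u0] a sum0 i; have := congr1 (ip^~ (u i)) sum0 => /=.
rewrite ip0l ip_suml (bigD1 i) //= ipZl u1 mulr1 big1 ?addr0 // => j /eqP ji.
by rewrite ipZl u0 ?mulr0.
Qed.

Lemma onb_expansion W (I : finType) (f : I -> H) : subspace W -> is_onb ip W f ->
  forall x, W x -> x = \sum_j ip x (f j) *: f j.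
Proof.
move=> sW /is_onbP [fW [f1 f0] fmax] x Wx; apply/subr0_eq/fmax.
  by apply: (subspaceB sW) => //; apply: (subspace_sum sW) => j; apply: (subspaceZ sW).
move=> i; rewrite ipBr ip_sumr (bigD1 i) //= ipZr f1 mulr1 big1 ?addr0.
  by rewrite [ip x _]ipC conjCK subrr.
by move=> j /eqP ji; rewrite ipZr f0 ?mulr0 // => /esym.
Qed.

Lemma leq_orthonormal_onb_card A B T k m (f : 'I_k -> H) (u : 'I_m -> H) :
  subspace A -> subspace B -> linear_embedding T A B -> is_onb ip B f ->
  orthonormal_family u -> (forall i, A (u i)) -> (m <= k)%N.
Proof.
move=> sA sB [lT TAB T_inj] onb_f ou Au.
apply: (@leq_free_span _ _ m k (T \o u) f (fun i j => ip (T (u i)) (f j))).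
  move=> a /= sum0; apply: (orthonormal_free ou); apply: T_inj.
    by apply: (subspace_sum sA) => i; apply: (subspaceZ sA).
  by rewrite lin_sum //; under eq_bigr do rewrite linZ //.
by move=> i; apply: (onb_expansion sB onb_f); apply: TAB.
Qed.

Lemma leq_onb_card A B T k m (f : 'I_k -> H) (e : 'I_m -> H) :
  subspace A -> subspace B -> linear_embedding T A B ->
  is_onb ip A e -> is_onb ip B f -> (m <= k)%N.
Proof.
move=> sA sB embT /is_onbP [eA oe _] onb_f.
exact: leq_orthonormal_onb_card sA sB embT onb_f oe eA.
Qed.

Lemma onb_card_unique W n m (b : 'I_n -> H) (g : 'I_m -> H) :
  subspace W -> is_onb ip W b -> is_onb ip W g -> n = m.
Proof.
move=> sW onb_b onb_g; have idW := subset_embedding (@subset_refl _ W).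
apply/eqP; rewrite eqn_leq (leq_onb_card sW sW idW onb_b onb_g).
by rewrite (leq_onb_card sW sW idW onb_g onb_b).
Qed.

Lemma ip_real x : ip x x = (complex.Re (ip x x))%:C%C.
Proof. by rewrite RRe_real // ger0_real // ip_ge0. Qed.

Lemma Re_ip_ge0 x : 0 <= complex.Re (ip x x).
Proof. by rewrite -ler0c -ip_real ip_ge0. Qed.

Lemma unit_multiple x : x <> 0 -> exists c : R[i], ip (c *: x) (c *: x) = 1.
Proof.
move=> x0; set r := complex.Re (ip x x).
have r_gt0 : 0 < r.
  rewrite lt0r Re_ip_ge0 andbT; apply/eqP => r0; apply/x0/ip_eq0.
  by rewrite ip_real -/r r0.
exists ((Num.sqrt r)^-1)%:C%C.
rewrite ipZl ipZr geC0_conj ?ler0c ?invr_ge0 ?sqrtr_ge0 // ip_real -/r -!rmorphM /=.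
by rewrite mulrA -expr2 exprVn sqr_sqrtr ?mulVf ?(gt_eqF r_gt0) // ltW.
Qed.

Lemma exists_onb_set W : subspace W -> exists S, onb_set W S.
Proof.
move=> sW.
have [S [[SW So] S_max]] : exists S, (S `<=` W /\ orthonormal_set S) /\
    forall S', S `<` S' -> ~ (S' `<=` W /\ orthonormal_set S').
  apply: Zorn_bigcup => F FP F_tot; split=> [x [X FX Xx]|]; first exact: (FP X FX).1.
  split=> [x [X FX Xx]|x y [X FX Xx] [Y FY Yy] xy]; first exact: (FP X FX).2.1.
  have [XY|YX] := F_tot X Y FX FY.
    exact: (FP Y FY).2.2 x y (XY _ Xx) Yy xy.
  exact: (FP X FX).2.2 x y Xx (YX _ Yy) xy.
exists S; split=> // x Wx xS; apply: contrapT => x0.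
have [c c1] := unit_multiple x0; set y := c *: x in c1.
have yS s : S s -> ip s y = 0 by move=> Ss; rewrite ipZr xS // mulr0.
have Sy : ~ S y by move=> /yS; rewrite c1; apply/eqP; rewrite oner_eq0.
apply: (S_max (S `|` [set y])); first by split=> [z Sz|/(_ y (or_intror erefl))]; [left|].
split; first by move=> z [/SW //|->]; apply: (subspaceZ sW).
split=> [z [/So.1 //|->] //|z t [Sz|->] [St|->] zt].
- exact: So.2.
- exact: yS.
- by rewrite ipC yS // conjC0.
- by [].
Qed.

Lemma parallelogram x y :
  ip (x - y) (x - y) + ip (x + y) (x + y) = 2 * ip x x + 2 * ip y y.
Proof. by rewrite !(ipBl, ipBr, ipDl, ipDr); ring. Qed.

Lemma orthonormal_set_countable S : ip_separable ip -> orthonormal_set S -> countable S.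
Proof.
case=> d d_dense [S1 S0].
have /choice [g near_g] : forall x, exists n, S x -> ipnorm ip (x - d n) < 1 / 2.
  by move=> x; have [n dn] := d_dense x (1 / 2) ltac:(lra); exists n.
have small z : ipnorm ip z < 1 / 2 -> complex.Re (ip z z) < 1 / 4.
  rewrite /ipnorm -{2}(sqr_sqrtr (Re_ip_ge0 z)).
  by have := sqrtr_ge0 (complex.Re (ip z z)); set s := Num.sqrt _; nra.
(* Distinct unit vectors of S are at distance sqrt 2, so they cannot both lie
   within 1/2 of the same point d n. *)
apply/countable_injP; exists g => x y /set_mem Sx /set_mem Sy gxy.
apply: contrapT => xy.
set a := x - d (g x); set b := y - d (g x).
have ha : complex.Re (ip a a) < 1 / 4 by apply/small/near_g.
have hb : complex.Re (ip b b) < 1 / 4 by apply/small; rewrite /b gxy; apply: near_g.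
have ab2 : ip (a - b) (a - b) = 2.
  rewrite [a - b](_ : _ = x - y); last by rewrite /a /b opprB addrA subrK.
  by rewrite !(ipBl, ipBr) S1 // S1 // S0 // S0 //; [ring | move/esym].
have := parallelogram a b; rewrite ab2 [ip a a]ip_real [ip b b]ip_real ip_real.
move=> /(congr1 (@complex.Re R)) /=.
have := Re_ip_ge0 (a + b); lra.
Qed.

Lemma onb_bij W (I J : Type) (b : I -> H) (h : J -> I) :
  is_onb ip W b -> bijective h -> is_onb ip W (b \o h).
Proof.
move=> /is_onbP [bW [b1 b0] b_max] [h' hK h'K]; apply/is_onbP; split=> [j||x Wx bx].
- exact: bW.
- by split=> [j|j j' jj']; [apply: b1 | apply: b0 => /(can_inj hK)].
- by apply: b_max => // i; rewrite -(h'K i); apply: bx.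
Qed.

Lemma onb_set_val W S : onb_set W S -> is_onb ip W (fun s : set_type S => val s).
Proof.
move=> [SW So S_max]; apply/is_onbP; split.
- by move=> s; apply/SW/set_mem/valP.
- by apply: (orthonormal_set_family So) => [s t /val_inj|s]; last exact/set_mem/valP.
- by move=> x Wx sx; apply: S_max => // s Ss; apply: (sx (exist _ s (mem_set Ss))).
Qed.

Lemma onb_of_card W S k :
  onb_set W S -> (S #= `I_k)%card -> exists b : 'I_k -> H, is_onb ip W b.
Proof.
move=> onbS /card_eq_I_enum [h h_bij].
by exists ((fun s : set_type S => val s) \o h); apply: onb_bij (onb_set_val onbS) h_bij.
Qed.

Lemma same_hdim_of_card_eq W1 W2 S1 S2 :
  onb_set W1 S1 -> onb_set W2 S2 -> (S1 #= S2)%card -> same_hdim ip W1 W2.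
Proof.
move=> onb1 onb2 /card_bijP [f f_bij].
exists (set_type S1), (fun s => val s), ((fun s : set_type S2 => val s) \o f).
by split; [apply: onb_set_val | apply: onb_bij (onb_set_val onb2) f_bij].
Qed.

Lemma finite_of_onb A B T k (f : 'I_k -> H) S :
  subspace A -> subspace B -> linear_embedding T A B -> is_onb ip B f ->
  S `<=` A -> orthonormal_set S -> finite_set S.
Proof.
move=> sA sB embT onb_f SA So; apply: contrapT => /infinite_set_seq [u [u_inj Su]].
suff: (k.+1 <= k)%N by rewrite ltnn.
apply: (leq_orthonormal_onb_card (u := u \o val) sA sB embT onb_f).
  by apply: (orthonormal_set_family So) => [i j /u_inj /val_inj|i]; last apply: Su.
by move=> i; apply/SA/Su.
Qed.

Lemma onb_set_card_eq A B Ta Tb SA SB :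
  ip_separable ip -> subspace A -> subspace B ->
  linear_embedding Ta A B -> linear_embedding Tb B A ->
  onb_set A SA -> onb_set B SB -> (SA #= SB)%card.
Proof.
move=> sep sA sB embA embB onbA onbB.
have [SA_A SA_o _] := onbA; have [SB_B SB_o _] := onbB.
have [[k SAk]|SA_inf] := pselect (finite_set SA).
  have [e onb_e] := onb_of_card onbA SAk.
  have [l SBl] := finite_of_onb sB sA embB onb_e SB_B SB_o.
  have [f onb_f] := onb_of_card onbB SBl.
  have kl : k = l.
    apply/eqP; rewrite eqn_leq (leq_onb_card sA sB embA onb_e onb_f).
    by rewrite (leq_onb_card sB sA embB onb_f onb_e).
  by rewrite kl in SAk; apply: card_eq_trans SAk (card_esym SBl).
have SB_inf : infinite_set SB.
  move=> [l SBl]; have [f onb_f] := onb_of_card onbB SBl.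
  exact/SA_inf/(finite_of_onb sA sB embA onb_f SA_A SA_o).
apply: card_eq_trans (eq_card_nat _ SA_inf) (card_esym (eq_card_nat _ SB_inf)).
  exact: orthonormal_set_countable SA_o.
exact: orthonormal_set_countable SB_o.
Qed.

End InnerProduct.

Section IsometricPair.
Variables (R : realType) (H : lmodType R[i]) (ip : H -> H -> R[i]).
Variables V1 V2 V1s V2s : H -> H.
Hypothesis hip : is_inner_product ip.
Hypothesis isoV : isometric_pair ip V1 V2.
Hypothesis adj1 : is_adjoint ip V1 V1s.
Hypothesis adj2 : is_adjoint ip V2 V2s.

Local Notation W := (kernel (fun x => V2s (V1s x))).

Let lin1 : is_linear_op V1. Proof. by case: isoV => -[]. Qed.
Let lin2 : is_linear_op V2. Proof. by case: isoV => _ []. Qed.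
Let lin1s : is_linear_op V1s. Proof. exact: (adjoint_linear hip adj1). Qed.
Let lin2s : is_linear_op V2s. Proof. exact: (adjoint_linear hip adj2). Qed.
Let V1K : cancel V1 V1s.
Proof. by case: isoV => iso1 _ _; exact: (isometry_adjointK hip iso1 adj1). Qed.
Let V2K : cancel V2 V2s.
Proof. by case: isoV => _ iso2 _; exact: (isometry_adjointK hip iso2 adj2). Qed.
Let adj_comm x : V2s (V1s x) = V1s (V2s x).
Proof. by case: isoV => _ _ comm; exact: (adjoint_commute hip comm adj1 adj2). Qed.

Lemma defect_op_kerV1s x :
  V1s x = 0 -> defect_op V1 V2 V1s V2s x = coker_proj V2 V2s x.
Proof.
move=> V1sx; rewrite /defect_op -adj_comm V1sx.
by rewrite !(lin0 lin1, lin0 lin2, lin0 lin2s) subr0 addr0.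
Qed.

Lemma defect_op_kerV2s x :
  V2s x = 0 -> defect_op V1 V2 V1s V2s x = coker_proj V1 V1s x.
Proof.
by move=> V2sx; rewrite /defect_op V2sx !(lin0 lin1, lin0 lin2, lin0 lin1s) subr0 addr0.
Qed.

Hypothesis defect_W : orth_compl ip (kernel (defect_op V1 V2 V1s V2s)) = W.

Lemma kerV1s_embedding : linear_embedding (coker_proj V2 V2s) (kernel V1s) (kernel V2s).
Proof.
split=> [||x V1sx P2x]; first exact: coker_proj_linear.
  by move=> x _; apply: coker_proj_ker lin2s V2K.
apply: (orth_compl_self hip (S := kernel (defect_op V1 V2 V1s V2s))).
  by rewrite /kernel /= defect_op_kerV1s.
by rewrite defect_W /kernel /= V1sx lin0.
Qed.

Lemma kerV2s_embedding : linear_embedding (coker_proj V1 V1s) (kernel V2s) (kernel V1s).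
Proof.
split=> [||x V2sx P1x]; first exact: coker_proj_linear.
  by move=> x _; apply: coker_proj_ker lin1s V1K.
apply: (orth_compl_self hip (S := kernel (defect_op V1 V2 V1s V2s))).
  by rewrite /kernel /= defect_op_kerV2s.
by rewrite defect_W /kernel /= adj_comm V2sx lin0.
Qed.

Lemma onb_kerV2sV1s (I J : Type) (e : I -> H) (f : J -> H) :
  is_onb ip (kernel V1s) e -> is_onb ip (kernel V2s) f ->
  is_onb ip W (fun s : I + J => match s with inl i => e i | inr j => V1 (f j) end).
Proof.
have iso1 : forall x y, ip (V1 x) (V1 y) = ip x y by case: isoV => -[].
move=> /is_onbP [eW [e1 e0] e_max] /is_onbP [fW [f1 f0] f_max].
apply/is_onbP; split=> [[i|j]||x Wx ef_x]; rewrite /kernel /=.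
- by move: (eW i) => /= ->; apply: lin0.
- by rewrite V1K; apply: fW.
- split=> [[i|j]|[i|j] [i'|j'] neq] /=.
  + exact: e1.
  + by rewrite iso1; apply: f1.
  + by apply: e0 => ii'; apply: neq; congr inl.
  + exact: (adjoint_ker_orth hip adj1 (eW i)).
  + by rewrite ipC // (adjoint_ker_orth hip adj1 (eW i')) conjC0.
  + by rewrite iso1; apply: f0 => jj'; apply: neq; congr inr.
have P1x : coker_proj V1 V1s x = 0.
  apply: e_max; first exact: coker_proj_ker.
  move=> i; rewrite ipBr // (ef_x (inl i)) (adjoint_ker_orth hip adj1 (eW i)).
  exact: subrr.
have V1sx : V1s x = 0.
  by apply: f_max => // j; rewrite -adj1; apply: (ef_x (inr j)).
by rewrite -[x](subrK (V1 (V1s x))) -/(coker_proj V1 V1s x) P1x V1sx lin0 // addr0.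
Qed.

End IsometricPair.

Theorem proposition3p8 (R : realType) (H : lmodType R[i]) (ip : H -> H -> R[i])
    (V1 V2 V1s V2s : H -> H) :
  is_hilbert_space ip ->
  isometric_pair ip V1 V2 ->
  is_adjoint ip V1 V1s -> is_adjoint ip V2 V2s ->
  (* (ker C(V1,V2))^perp = W = ker (V1 V2)^* = ker (V2^* V1^* ) *)
  orth_compl ip (kernel (defect_op V1 V2 V1s V2s)) = kernel (fun x => V2s (V1s x)) ->
  same_hdim ip (kernel V1s) (kernel V2s) /\
  (forall (n : nat) (b : 'I_n -> H),
      is_onb ip (kernel (fun x => V2s (V1s x))) b -> ~~ odd n).
Proof.
case=> hip _ sep isoV adj1 adj2 defect_W.
have lin1s := adjoint_linear hip adj1; have lin2s := adjoint_linear hip adj2.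
have sW1 := kernel_subspace lin1s; have sW2 := kernel_subspace lin2s.
have sW := kernel_subspace (lin_comp lin2s lin1s).
have [S1 onb1] := exists_onb_set hip sW1; have [S2 onb2] := exists_onb_set hip sW2.
have S12 : (S1 #= S2)%card.
  apply: (onb_set_card_eq hip sep sW1 sW2 _ _ onb1 onb2).
    exact: (kerV1s_embedding hip isoV adj1 adj2 defect_W).
  exact: (kerV2s_embedding hip isoV adj1 adj2 defect_W).
split; first exact: same_hdim_of_card_eq onb1 onb2 S12.
move=> n b onb_b; have [S1_W1 S1_o _] := onb1.
have [k S1k] : finite_set S1.
  apply: (finite_of_onb hip sW1 sW _ onb_b S1_W1 S1_o).
  exact: subset_embedding (kernel_comp_sub lin2s).
have [e onb_e] := onb_of_card onb1 S1k.
have [f onb_f] := onb_of_card onb2 (card_eq_trans (card_esym S12) S1k).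
have onb_ef := onb_bij (onb_kerV2sV1s hip isoV adj1 adj2 onb_e onb_f)
  (Bijective (@splitK k k) (@unsplitK k k)).
by rewrite (onb_card_unique hip sW onb_b onb_ef) oddD addbb.
Qed.
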